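(* Let $(L,\le,\bot,\top)$ be a complete lattice and $(\&_i,\swarrow^i,\nwarrow_i)$, $i=1,\dots,n$, adjoint triples on $L$ with $x\,\&_i\,\top=\top\,\&_i\,x=x$ for all $x\in L$ and all $i$. Let $(A,B,R,\sigma)$ be a normalized context whose concept lattice $\mathcal{M}$ has a decomposition into independent blocks $\{K_\mu\}_{\mu\in\Lambda}$, and let $A_\mu,B_\mu$ be the associated sets defined below. Then $(A_\mu,B_\mu,R_\mu,\sigma_\mu)$, where $R_\mu,\sigma_\mu$ are the restrictions of $R,\sigma$ to $A_\mu\times B_\mu$, is a separable subcontext of $(A,B,R,\sigma)$ for every $\mu\in\Lambda$.
   Context: An adjoint triple on $L$ is a triple of maps $\&,\swarrow,\nwarrow\colon L\times L\to L$ with $x\le z\swarrow y\iff x\& y\le z\iff y\le z\nwarrow x$. A context is $(A,B,R,\sigma)$ with $A,B$ non-empty, $R\colon A\times B\to L$, $\sigma\colon A\times B\to\{1,\dots,n\}$; normalized means every $a\in A$ has $b_1,b_2$ with $R(a,b_1)\ne\bot$, $R(a,b_2)=\bot$, and every $b\in B$ has $a_1,a_2$ with $R(a_1,b)\ne\bot$, $R(a_2,b)=\bot$. For $g\colon B\to L$, $f\colon A\to L$: $g^\uparrow(a)=\inf_{b}R(a,b)\swarrow^{\sigma(a,b)}g(b)$, $f^\downarrow(b)=\inf_{a}R(a,b)\nwarrow_{\sigma(a,b)}f(a)$. $\mathcal{M}$ is the complete lattice of pairs $\langle g,f\rangle$ with $g^\uparrow=f$, $f^\downarrow=g$, ordered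 by $g_1\le g_2$ pointwise; top $\langle g_\top,f_\bot\rangle$, bottom $\langle g_\bot,f_\top\rangle$ ($g_\top,g_\bot,f_\top,f_\bot$ constant maps). $\phi_{a,x}\colon A\to L$ takes value $x$ at $a$ and $\bot$ elsewhere; $\phi_{b,y}\colon B\to L$ takes value $y$ at $b$ and $\bot$ elsewhere. For a bounded lattice $(M,\preceq,\bot,\top)$, a block is a sublattice $K\subsetneq M$ with $K\setminus\{\bot,\top\}\ne\varnothing$ and $(\{x\mid k\preceq x\}\cup\{x\mid x\preceq k\})\setminus\{\bot,\top\}\subseteq K$ for all $k\in K\setminus\{\bot,\top\}$; blocks $K_1,K_2$ are independent if $K_1\cap K_2\subseteq\{\bot,\top\}$; a decomposition into independent blocks is a family of pairwise independent blocks whose union is $M$. With $K_\mu^*=K_\mu\setminus\{\langle g_\top,f_\bot\rangle,\langle g_\bot,f_\top\rangle\}$: $A_\mu=\{a\in A\mid\langle\phi_{a,x}^\downarrow,\phi_{a,x}^{\downarrow\uparrow}\rangle\in K_\mu^*\text{ for some }x\in L\}$ and $B_\mu=\{b\in B\mid\langle\phi_{b,y}^{\uparrow\downarrow},\phi_{b,y}^{\uparrow}\rangle\in K_\mu^*\text{ for some }y\in L\}$. A separable subcontext is a tuple $(Y,X,R_{Y\times X},\sigma_{Y\times X})$ with $Y\subsetneq A$, $X\subsetneq B$ non-empty, such that $R(a,b)\ne\bot$ for some $a\in Y,b\in X$, $R(a,b')=\bot$ for all $(a,b')\in Y\times(B\setminus X)$, and $R(a',b)=\bot$ for all $(a',b)\in(A\setminus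 Y)\times X$. *)

From mathcomp Require Import all_boot.
From Stdlib Require Import ClassicalDescription.

Set Implicit Arguments.
Unset Strict Implicit.
Unset Printing Implicit Defensive.

Section FCA.

Variable L : Type.
Variable le : L -> L -> Prop.
Variable inf : (L -> Prop) -> L.

Definition complete_lattice : Prop :=
  (forall x, le x x) /\
  (forall x y, le x y -> le y x -> x = y) /\
  (forall x y z, le x y -> le y z -> le x z) /\
  (forall (S : L -> Prop) x, S x -> le (inf S) x) /\
  (forall (S : L -> Prop) y, (forall x, S x -> le y x) -> le y (inf S)).

Definition botL : L := inf (fun _ => True).
Definition topL : L := inf (fun _ => False).

Definition adjoint_triple (conj sw nw : L -> L -> L) : Prop :=
  forall x y z,
    (le x (sw z y) <-> le (conj x y) z) /\
    (le (conj x y) z <-> le y (nw z x)).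

Variable n : nat.
Variables (sw nw : 'I_n -> L -> L -> L).
Variables (A B : Type).
Variable R : A -> B -> L.
Variable sigma : A -> B -> 'I_n.

Definition normalized : Prop :=
  (forall a : A, (exists b1, R a b1 <> botL) /\ (exists b2, R a b2 = botL)) /\
  (forall b : B, (exists a1, R a1 b <> botL) /\ (exists a2, R a2 b = botL)).

Definition up (g : B -> L) : A -> L :=
  fun a => inf (fun z => exists b, z = sw (sigma a b) (R a b) (g b)).
Definition down (f : A -> L) : B -> L :=
  fun b => inf (fun z => exists a, z = nw (sigma a b) (R a b) (f a)).

Definition pairT : Type := ((B -> L) * (A -> L))%type.

Definition is_concept (c : pairT) : Prop := up c.1 = c.2 /\ down c.2 = c.1.

Definition M_le (c d : pairT) : Prop := forall b, le (c.1 b) (d.1 b).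

Definition M_top : pairT := (fun _ => topL, fun _ => botL).
Definition M_bot : pairT := (fun _ => botL, fun _ => topL).

Definition M_glb (x y m : pairT) : Prop :=
  is_concept m /\ M_le m x /\ M_le m y /\
  (forall c, is_concept c -> M_le c x -> M_le c y -> M_le c m).
Definition M_lub (x y m : pairT) : Prop :=
  is_concept m /\ M_le x m /\ M_le y m /\
  (forall c, is_concept c -> M_le x c -> M_le y c -> M_le m c).

Definition sublattice (K : pairT -> Prop) : Prop :=
  (forall c, K c -> is_concept c) /\
  (forall x y m, K x -> K y -> M_glb x y m -> K m) /\
  (forall x y m, K x -> K y -> M_lub x y m -> K m).

Definition trivial_elt (c : pairT) : Prop := c = M_bot \/ c = M_top.

Definition block (K : pairT -> Prop) : Prop :=
  sublattice K /\
  (exists c, is_concept c /\ ~ K c) /\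
  (exists k, K k /\ ~ trivial_elt k) /\
  (forall k, K k -> ~ trivial_elt k ->
     forall x, is_concept x -> (M_le k x \/ M_le x k) -> ~ trivial_elt x -> K x).

Definition independent (K1 K2 : pairT -> Prop) : Prop :=
  forall c, K1 c -> K2 c -> trivial_elt c.

Definition independent_block_decomposition (Lam : Type) (K : Lam -> pairT -> Prop) : Prop :=
  (forall mu, block (K mu)) /\
  (forall mu nu, mu <> nu -> independent (K mu) (K nu)) /\
  (forall c, is_concept c <-> exists mu, K mu c).

Definition phiA (a : A) (x : L) : A -> L :=
  fun a' => if excluded_middle_informative (a' = a) then x else botL.
Definition phiB (b : B) (y : L) : B -> L :=
  fun b' => if excluded_middle_informative (b' = b) then y else botL.

Definition Kstar (K : pairT -> Prop) (c : pairT) : Prop := K c /\ ~ trivial_elt c.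

Definition A_mu (K : pairT -> Prop) : A -> Prop :=
  fun a => exists x, Kstar K (down (phiA a x), up (down (phiA a x))).
Definition B_mu (K : pairT -> Prop) : B -> Prop :=
  fun b => exists y, Kstar K (down (up (phiB b y)), up (phiB b y)).

(* separable subcontext (Y, X, R|YxX, sigma|YxX); the restrictions of R and
   sigma are determined by Y and X *)
Definition separable_subcontext (Y : A -> Prop) (X : B -> Prop) : Prop :=
  (exists a, Y a) /\ (exists a, ~ Y a) /\
  (exists b, X b) /\ (exists b, ~ X b) /\
  (exists a b, Y a /\ X b /\ R a b <> botL) /\
  (forall a b', Y a -> ~ X b' -> R a b' = botL) /\
  (forall a' b, ~ Y a' -> X b -> R a' b = botL).

End FCA.

From mathcomp Require Import all_boot.
From Stdlib Require Import Classical FunctionalExtensionality ClassicalDescription.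

(* For a in A, the concept gamma_a generated by phi_{a,top} has extent R(a,-)
   and is the least of the concepts generated by the phi_{a,x}; as blocks are
   closed under comparable non-trivial concepts, a is in A_mu iff gamma_a is in
   K_mu.  Dually, b is in B_mu iff the concept beta_b generated by phi_{b,top},
   whose intent is R(-,b), is in K_mu.  When R(a,b) <> bot, the concept
   generated by phi_{b,R(a,b)} is non-trivial and lies below gamma_a and beta_b,
   so a in A_mu <-> b in B_mu: R vanishes on A_mu x (B \ B_mu) and on
   (A \ A_mu) x B_mu.  A non-trivial concept <g,f> of K_mu lies below the
   concepts generated by the phi_{a,f(a)}, which cannot all be the top, so A_mu
   is non-empty; a second block, which exists because K_mu is proper, supplies
   an object outside A_mu by independence. *)

Set Implicit Arguments.
Unset Strict Implicit.
Unset Printing Implicit Defensive.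

Section ConceptLattice.

Variables (L : Type) (le : L -> L -> Prop) (inf : (L -> Prop) -> L).
Hypothesis HL : complete_lattice le inf.

Local Notation bot := (botL inf).
Local Notation top := (topL inf).

Lemma le_refl x : le x x.
Proof. by case: HL => refl _; apply: refl. Qed.

Lemma le_anti x y : le x y -> le y x -> x = y.
Proof. by case: HL => _ [anti _]; apply: anti. Qed.

Lemma le_trans y x z : le x y -> le y z -> le x z.
Proof. by case: HL => _ [_ [trans _]]; apply: trans. Qed.

Lemma inf_le (S : L -> Prop) x : S x -> le (inf S) x.
Proof. by case: HL => _ [_ [_ [lb _]]]; apply: lb. Qed.

Lemma le_inf (S : L -> Prop) y : (forall x, S x -> le y x) -> le y (inf S).
Proof. by case: HL => _ [_ [_ [_ glb]]]; apply: glb. Qed.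

Lemma bot_le x : le bot x.
Proof. exact: inf_le. Qed.

Lemma le_top x : le x top.
Proof. by apply: le_inf. Qed.

Lemma le_ext u v : (forall x, le x u <-> le x v) -> u = v.
Proof.
by move=> H; apply: le_anti; [apply/H | apply/H]; apply: le_refl.
Qed.

Lemma neither_bot_nor_top (T : Type) (h : T -> L) :
  (exists t, h t <> bot) -> (exists t, h t = bot) ->
  h <> (fun _ => bot) /\ h <> (fun _ => top).
Proof.
move=> [t1 Ht1] [t2 Ht2]; split=> Eh; apply: Ht1; rewrite Eh //.
by rewrite -Ht2 Eh.
Qed.

Variable n : nat.
Variables conj sw nw : 'I_n -> L -> L -> L.
Hypothesis Hadj : forall i, adjoint_triple le (conj i) (sw i) (nw i).

Lemma le_sw i x y z : le x (sw i z y) <-> le (conj i x y) z.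
Proof. exact: (proj1 (Hadj i x y z)). Qed.

Lemma le_nw i x y z : le y (nw i z x) <-> le (conj i x y) z.
Proof. by split => /(proj2 (Hadj i x y z)). Qed.

Lemma sw_bot i z : sw i z bot = top.
Proof. by apply: le_anti (le_top _) _; apply/le_sw/le_nw; apply: bot_le. Qed.

Lemma nw_bot i z : nw i z bot = top.
Proof. by apply: le_anti (le_top _) _; apply/le_nw/le_sw; apply: bot_le. Qed.

Hypothesis conj_top : forall i x, conj i x top = x.
Hypothesis top_conj : forall i x, conj i top x = x.

Lemma sw_top i z : sw i z top = z.
Proof. by apply: le_ext => x; rewrite -{2}(conj_top i x); apply: le_sw. Qed.

Lemma nw_top i z : nw i z top = z.
Proof. by apply: le_ext => x; rewrite -{2}(top_conj i x); apply: le_nw. Qed.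

Lemma sw_self i z : sw i z z = top.
Proof.
by apply: le_anti (le_top _) _; apply/le_sw; rewrite top_conj; apply: le_refl.
Qed.

Variables (A B : Type) (R : A -> B -> L) (sigma : A -> B -> 'I_n).

Local Notation up := (up inf sw R sigma).
Local Notation down := (down inf nw R sigma).
Local Notation concept := (is_concept inf sw nw R sigma).
Local Notation M_le := (M_le le).
Local Notation M_top := (M_top inf A B).
Local Notation M_bot := (M_bot inf A B).
Local Notation trivial := (trivial_elt inf).

Lemma down_le f a b : le (down f b) (nw (sigma a b) (R a b) (f a)).
Proof. by apply: inf_le; exists a. Qed.

Lemma le_down f b y :
  (forall a, le y (nw (sigma a b) (R a b) (f a))) -> le y (down f b).
Proof. by move=> H; apply: le_inf => _ [a ->]. Qed.

Lemma up_le g a b : le (up g a) (sw (sigma a b) (R a b) (g b)).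
Proof. by apply: inf_le; exists b. Qed.

Lemma le_up g a y :
  (forall b, le y (sw (sigma a b) (R a b) (g b))) -> le y (up g a).
Proof. by move=> H; apply: le_inf => _ [b ->]. Qed.

Lemma galois f g :
  (forall b, le (g b) (down f b)) <-> (forall a, le (f a) (up g a)).
Proof.
split=> H x; [apply: le_up => b | apply: le_down => a].
- by apply/le_sw/le_nw; apply: le_trans (H b) (down_le _ _ _).
- by apply/le_nw/le_sw; apply: le_trans (H a) (up_le _ _ _).
Qed.

Lemma le_down_up g b : le (g b) (down (up g) b).
Proof. by move: b; apply/galois => a; apply: le_refl. Qed.

Lemma le_up_down f a : le (f a) (up (down f) a).
Proof. by move: a; apply/galois => b; apply: le_refl. Qed.

Lemma down_anti f f' :
  (forall a, le (f a) (f' a)) -> forall b, le (down f' b) (down f b).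
Proof. by move=> H; apply/galois => a; apply: le_trans (H a) (le_up_down _ _). Qed.

Lemma up_anti g g' :
  (forall b, le (g b) (g' b)) -> forall a, le (up g' a) (up g a).
Proof. by move=> H; apply/galois => b; apply: le_trans (H b) (le_down_up _ _). Qed.

Lemma down_up_down f : down (up (down f)) = down f.
Proof.
apply: functional_extensionality => b.
exact: le_anti (down_anti (le_up_down f) b) (le_down_up _ b).
Qed.

Lemma up_down_up g : up (down (up g)) = up g.
Proof.
apply: functional_extensionality => a.
exact: le_anti (up_anti (le_down_up g) a) (le_up_down _ a).
Qed.

Lemma concept_eq_extent c d : concept c -> concept d -> c.1 = d.1 -> c = d.
Proof. by case: c d => [g f] [g' f'] [/= <- _] [/= <- _] /= ->. Qed.

Lemma concept_eq_intent c d : concept c -> concept d -> c.2 = d.2 -> c = d.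
Proof. by case: c d => [g f] [g' f'] [_ /= <-] [_ /= <-] /= ->. Qed.

Lemma phiA_eq (a : A) x : phiA inf a x a = x.
Proof. by rewrite /phiA; case: excluded_middle_informative. Qed.

Lemma phiB_eq (b : B) y : phiB inf b y b = y.
Proof. by rewrite /phiB; case: excluded_middle_informative. Qed.

Lemma phiA_le (f : A -> L) a x : le x (f a) -> forall a', le (phiA inf a x a') (f a').
Proof.
move=> Hx a'; rewrite /phiA.
case: (excluded_middle_informative (a' = a)) => [Ea | _] /=; last exact: bot_le.
by rewrite Ea.
Qed.

Lemma phiB_le (g : B -> L) b y : le y (g b) -> forall b', le (phiB inf b y b') (g b').
Proof.
move=> Hy b'; rewrite /phiB.
case: (excluded_middle_informative (b' = b)) => [Eb | _] /=; last exact: bot_le.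
by rewrite Eb.
Qed.

Lemma down_phiA a x b : down (phiA inf a x) b = nw (sigma a b) (R a b) x.
Proof.
apply: le_anti; first by rewrite -{2}(phiA_eq a x); apply: down_le.
apply: le_down => a'; rewrite /phiA.
case: (excluded_middle_informative (a' = a)) => [Ea | _] /=.
- by rewrite Ea; apply: le_refl.
- by rewrite nw_bot; apply: le_top.
Qed.

Lemma up_phiB b y a : up (phiB inf b y) a = sw (sigma a b) (R a b) y.
Proof.
apply: le_anti; first by rewrite -{2}(phiB_eq b y); apply: up_le.
apply: le_up => b'; rewrite /phiB.
case: (excluded_middle_informative (b' = b)) => [Eb | _] /=.
- by rewrite Eb; apply: le_refl.
- by rewrite sw_bot; apply: le_top.
Qed.

Definition objconcept a x : pairT L A B :=
  (down (phiA inf a x), up (down (phiA inf a x))).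

Definition attrconcept b y : pairT L A B :=
  (down (up (phiB inf b y)), up (phiB inf b y)).

Lemma objconcept_concept a x : concept (objconcept a x).
Proof. by split=> //=; rewrite down_up_down. Qed.

Lemma attrconcept_concept b y : concept (attrconcept b y).
Proof. by split=> //=; rewrite up_down_up. Qed.

Lemma objconcept_top_extent a : (objconcept a top).1 = R a.
Proof. by apply: functional_extensionality => b; rewrite /= down_phiA nw_top. Qed.

Lemma attrconcept_top_intent b : (attrconcept b top).2 = R^~ b.
Proof. by apply: functional_extensionality => a; rewrite /= up_phiB sw_top. Qed.

Lemma objconcept_top_le a x : M_le (objconcept a top) (objconcept a x).
Proof. by apply: down_anti; apply: phiA_le; rewrite phiA_eq; apply: le_top. Qed.

Lemma attrconcept_le_top b y : M_le (attrconcept b y) (attrconcept b top).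
Proof.
by apply: down_anti; apply: up_anti; apply: phiB_le; rewrite phiB_eq; apply: le_top.
Qed.

Lemma concept_le_objconcept c a : concept c -> M_le c (objconcept a (c.2 a)).
Proof.
case: c => g f [/= Hu _]; apply/galois => a'.
by rewrite Hu; apply: phiA_le; apply: le_refl.
Qed.

Lemma attrconcept_le_concept c b : concept c -> M_le (attrconcept b (c.1 b)) c.
Proof.
case: c => g f [/= Hu Hd] b'; rewrite /= -{2}Hd -Hu.
by apply: down_anti; apply: up_anti; apply: phiB_le; apply: le_refl.
Qed.

Lemma attrconcept_le_objconcept a b : M_le (attrconcept b (R a b)) (objconcept a top).
Proof.
by apply: down_anti; apply: phiA_le; rewrite up_phiB sw_self; apply: le_refl.
Qed.

Hypothesis Hnorm : normalized inf R.

Lemma M_top_concept : concept M_top.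
Proof.
split; apply: functional_extensionality.
- move=> a /=; case: (Hnorm.1 a) => _ [b Hb]; apply: le_anti (bot_le _).
  by rewrite -Hb -(sw_top (sigma a b) (R a b)); apply: up_le.
- move=> b /=; apply: le_anti (le_top _) _.
  by apply: le_down => a; rewrite nw_bot; apply: le_refl.
Qed.

Lemma M_bot_concept : concept M_bot.
Proof.
split; apply: functional_extensionality.
- move=> a /=; apply: le_anti (le_top _) _.
  by apply: le_up => b; rewrite sw_bot; apply: le_refl.
- move=> b /=; case: (Hnorm.2 b) => _ [a Ha]; apply: le_anti (bot_le _).
  by rewrite -Ha -(nw_top (sigma a b) (R a b)); apply: down_le.
Qed.

Lemma concept_top_of_extent c : concept c -> (forall b, le top (c.1 b)) -> c = M_top.
Proof.
move=> Hc H; apply: concept_eq_extent Hc M_top_concept _.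
by apply: functional_extensionality => b; apply: le_anti (le_top _) (H b).
Qed.

Lemma concept_bot_of_extent c : concept c -> (forall b, le (c.1 b) bot) -> c = M_bot.
Proof.
move=> Hc H; apply: concept_eq_extent Hc M_bot_concept _.
by apply: functional_extensionality => b; apply: le_anti (H b) (bot_le _).
Qed.

Lemma concept_bot_of_intent c : concept c -> (forall a, le top (c.2 a)) -> c = M_bot.
Proof.
move=> Hc H; apply: concept_eq_intent Hc M_bot_concept _.
by apply: functional_extensionality => a; apply: le_anti (le_top _) (H a).
Qed.

Lemma objconcepts_top c :
  concept c -> (forall a, objconcept a (c.2 a) = M_top) -> c = M_top.
Proof.
move=> Hc H; apply: concept_top_of_extent => // b.
case: Hc => _ <-; apply: le_down => a; rewrite -down_phiA.
by move: (H a) => /(congr1 (fun d => d.1 b)) /= ->; apply: le_refl.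
Qed.

Lemma attrconcepts_bot c :
  concept c -> (forall b, attrconcept b (c.1 b) = M_bot) -> c = M_bot.
Proof.
move=> Hc H; apply: concept_bot_of_intent => // a.
case: Hc => <- _; apply: le_up => b; rewrite -up_phiB.
by move: (H b) => /(congr1 (fun d => d.2 a)) /= ->; apply: le_refl.
Qed.

Lemma objconcept_top_nontrivial a : ~ trivial (objconcept a top).
Proof.
have [Hbot Htop] := neither_bot_nor_top (Hnorm.1 a).1 (Hnorm.1 a).2.
by case=> E; [apply: Hbot | apply: Htop]; rewrite -objconcept_top_extent E.
Qed.

Lemma attrconcept_top_nontrivial b : ~ trivial (attrconcept b top).
Proof.
have [Hbot Htop] := neither_bot_nor_top (Hnorm.2 b).1 (Hnorm.2 b).2.
by case=> E; [apply: Htop | apply: Hbot]; rewrite -attrconcept_top_intent E.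
Qed.

Lemma attrconcept_nontrivial a b : R a b <> bot -> ~ trivial (attrconcept b (R a b)).
Proof.
move=> Hab [E | E].
- apply: Hab; apply: le_anti (bot_le _).
  have := le_down_up (phiB inf b (R a b)) b.
  by rewrite phiB_eq; move: E => /(congr1 (fun d => d.1 b)) /= ->.
- apply: (@objconcept_top_nontrivial a); right.
  apply: concept_top_of_extent (objconcept_concept _ _) _ => b'.
  by apply: le_trans (attrconcept_le_objconcept a b b'); rewrite E; apply: le_refl.
Qed.

Section Block.

Variable K : pairT L A B -> Prop.
Hypothesis HK : block le inf sw nw R sigma K.

Lemma block_concept c : K c -> concept c.
Proof. exact: HK.1.1. Qed.

Lemma block_comparable_closed k c :
  K k -> ~ trivial k -> concept c -> (M_le k c \/ M_le c k) -> ~ trivial c -> K c.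
Proof. by move=> Kk Hk; apply: HK.2.2.2 Kk Hk c. Qed.

Lemma block_comparable_iff c d :
  concept c -> concept d -> ~ trivial c -> ~ trivial d ->
  (M_le c d \/ M_le d c) -> K c <-> K d.
Proof.
move=> Hc Hd Hnc Hnd Hcd; split=> [Kc | Kd].
- exact: block_comparable_closed Kc Hnc Hd Hcd Hnd.
- by apply: block_comparable_closed Kd Hnd Hc _ Hnc; case: Hcd; [right | left].
Qed.

Lemma block_meets_above (I : Type) (d : I -> pairT L A B) k :
  K k -> ~ trivial k -> (forall i, concept (d i)) -> (forall i, M_le k (d i)) ->
  ((forall i, d i = M_top) -> k = M_top) -> exists i, Kstar inf K (d i).
Proof.
move=> Kk Hk Hd Hle Htop; apply: NNPP => Hnone.
have Htriv i : trivial (d i).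
  apply: NNPP => Hi; apply: Hnone; exists i; split=> //.
  exact: block_comparable_closed Kk Hk (Hd i) (or_introl (Hle i)) Hi.
apply: Hk; case: (classic (exists i, d i = M_bot)) => [[i Ei] | Hnobot].
- left; apply: concept_bot_of_extent (block_concept Kk) _ => b.
  by move: (Hle i b); rewrite Ei.
- by right; apply: Htop => i; case: (Htriv i) => // Ei; case: Hnobot; exists i.
Qed.

Lemma block_meets_below (I : Type) (d : I -> pairT L A B) k :
  K k -> ~ trivial k -> (forall i, concept (d i)) -> (forall i, M_le (d i) k) ->
  ((forall i, d i = M_bot) -> k = M_bot) -> exists i, Kstar inf K (d i).
Proof.
move=> Kk Hk Hd Hle Hbot; apply: NNPP => Hnone.
have Htriv i : trivial (d i).
  apply: NNPP => Hi; apply: Hnone; exists i; split=> //.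
  exact: block_comparable_closed Kk Hk (Hd i) (or_intror (Hle i)) Hi.
apply: Hk; case: (classic (exists i, d i = M_top)) => [[i Ei] | Hnotop].
- right; apply: concept_top_of_extent (block_concept Kk) _ => b.
  by move: (Hle i b); rewrite Ei.
- by left; apply: Hbot => i; case: (Htriv i) => // Ei; case: Hnotop; exists i.
Qed.

Local Notation A_K := (A_mu inf sw nw R sigma K).
Local Notation B_K := (B_mu inf sw nw R sigma K).

Lemma A_mu_iff a : A_K a <-> K (objconcept a top).
Proof.
split=> [[x [Kx Hx]] | Ka]; last first.
  by exists top; split=> //; apply: objconcept_top_nontrivial.
apply: block_comparable_closed Kx Hx (objconcept_concept _ _) _ _.
- by right; apply: objconcept_top_le.
- exact: objconcept_top_nontrivial.
Qed.

Lemma B_mu_iff b : B_K b <-> K (attrconcept b top).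
Proof.
split=> [[y [Ky Hy]] | Kb]; last first.
  by exists top; split=> //; apply: attrconcept_top_nontrivial.
apply: block_comparable_closed Ky Hy (attrconcept_concept _ _) _ _.
- by left; apply: attrconcept_le_top.
- exact: attrconcept_top_nontrivial.
Qed.

Lemma A_mu_nonempty : exists a, A_K a.
Proof.
case: HK => _ [_ [[k [Kk Hk]] _]]; have Hc := block_concept Kk.
have [a Ha] := @block_meets_above _ (fun a => objconcept a (k.2 a)) k Kk Hk
  (fun a => objconcept_concept _ _) (fun a => concept_le_objconcept a Hc)
  (objconcepts_top Hc).
by exists a, (k.2 a).
Qed.

Lemma B_mu_nonempty : exists b, B_K b.
Proof.
case: HK => _ [_ [[k [Kk Hk]] _]]; have Hc := block_concept Kk.
have [b Hb] := @block_meets_below _ (fun b => attrconcept b (k.1 b)) k Kk Hk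
  (fun b => attrconcept_concept _ _) (fun b => attrconcept_le_concept b Hc)
  (attrconcepts_bot Hc).
by exists b, (k.1 b).
Qed.

Lemma A_mu_iff_B_mu a b : R a b <> bot -> A_K a <-> B_K b.
Proof.
move=> Hab; have Hc := attrconcept_concept b (R a b).
have Hnt := attrconcept_nontrivial Hab.
have obj_c := block_comparable_iff (objconcept_concept a top) Hc
  (@objconcept_top_nontrivial a) Hnt (or_intror (attrconcept_le_objconcept a b)).
have attr_c := block_comparable_iff (attrconcept_concept b top) Hc
  (@attrconcept_top_nontrivial b) Hnt (or_intror (attrconcept_le_top b (R a b))).
by split=> [/A_mu_iff/obj_c/attr_c/B_mu_iff | /B_mu_iff/attr_c/obj_c/A_mu_iff].
Qed.

End Block.

Section Decomposition.

Variables (Lam : Type) (K : Lam -> pairT L A B -> Prop).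
Hypothesis Hdec : independent_block_decomposition le inf sw nw R sigma K.

Local Notation A_K mu := (A_mu inf sw nw R sigma (K mu)).
Local Notation B_K mu := (B_mu inf sw nw R sigma (K mu)).

Lemma decomposition_block mu : block le inf sw nw R sigma (K mu).
Proof. exact: Hdec.1. Qed.

Lemma exists_other_block mu : exists nu : Lam, nu <> mu.
Proof.
case: (decomposition_block mu) => _ [[c [Hc Kc]] _].
have [nu Knu] := (Hdec.2.2 c).1 Hc.
by exists nu => Enu; apply: Kc; rewrite -Enu.
Qed.

Lemma A_mu_disjoint mu nu a : mu <> nu -> A_K mu a -> ~ A_K nu a.
Proof.
move=> Hne /(A_mu_iff (decomposition_block mu)) Ka.
move=> /(A_mu_iff (decomposition_block nu)) Ka'.
exact: (@objconcept_top_nontrivial a) (Hdec.2.1 mu nu Hne _ Ka Ka').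
Qed.

Lemma B_mu_disjoint mu nu b : mu <> nu -> B_K mu b -> ~ B_K nu b.
Proof.
move=> Hne /(B_mu_iff (decomposition_block mu)) Kb.
move=> /(B_mu_iff (decomposition_block nu)) Kb'.
exact: (@attrconcept_top_nontrivial b) (Hdec.2.1 mu nu Hne _ Kb Kb').
Qed.

Lemma block_separable mu : separable_subcontext inf R (A_K mu) (B_K mu).
Proof.
have Hmu := decomposition_block mu.
have [nu Hne] := exists_other_block mu.
have [a0 Ha0] := A_mu_nonempty Hmu.
split; first by exists a0.
split.
  have [a Ha] := A_mu_nonempty (decomposition_block nu).
  by exists a; apply: A_mu_disjoint Ha.
split; first exact: B_mu_nonempty Hmu.
split.
  have [b Hb] := B_mu_nonempty (decomposition_block nu).
  by exists b; apply: B_mu_disjoint Hb.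
split.
  have [[b Hb] _] := Hnorm.1 a0.
  by exists a0, b; split; last split; rewrite -?(A_mu_iff_B_mu Hmu Hb).
split=> a b Ha Hb; apply: NNPP => Hab.
- by apply: Hb; apply/(A_mu_iff_B_mu Hmu Hab).
- by apply: Ha; apply/(A_mu_iff_B_mu Hmu Hab).
Qed.

End Decomposition.

End ConceptLattice.

Theorem proposition35
  (L : Type) (le : L -> L -> Prop) (inf : (L -> Prop) -> L)
  (HL : complete_lattice le inf)
  (n : nat) (conj sw nw : 'I_n -> L -> L -> L)
  (Hadj : forall i, adjoint_triple le (conj i) (sw i) (nw i))
  (Hunit : forall i x, conj i x (topL inf) = x /\ conj i (topL inf) x = x)
  (A B : Type) (HA : inhabited A) (HB : inhabited B)
  (R : A -> B -> L) (sigma : A -> B -> 'I_n)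
  (Hnorm : normalized inf R)
  (Lam : Type) (K : Lam -> pairT L A B -> Prop)
  (Hdec : independent_block_decomposition le inf sw nw R sigma K)
  (mu : Lam) :
  separable_subcontext inf R
    (A_mu inf sw nw R sigma (K mu)) (B_mu inf sw nw R sigma (K mu)).
Proof.
have conj_top i x : conj i x (topL inf) = x by case: (Hunit i x).
have top_conj i x : conj i (topL inf) x = x by case: (Hunit i x).
exact: (block_separable HL Hadj conj_top top_conj Hnorm Hdec mu).
Qed.
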